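(* Let $f:[0,1]\to[0,\infty)$ be continuous and non-decreasing with $f(u)>0$ for $u\in(0,1]$, let $0<\delta<1$, let $r$ be a positive integer, and fix $x>0$ and $y\in\mathbb{R}$. Then the functions $\mathbf{h}\mapsto\psi_{com}(\mathbf{h})$, $\mathbf{h}\mapsto\psi_{int}(\mathbf{h},y)$ and $\mathbf{h}\mapsto\psi_{ext}(\mathbf{h},x)$ defined in the context are concave on $[0,1-\delta]^r$.
   Context: Notation: $H(t)=-t\log t-(1-t)\log(1-t)$ (natural log); $\operatorname{erf}(x)=\frac2{\sqrt\pi}\int_0^xe^{-t^2}dt$; $\Phi$ the standard normal distribution function; $\lambda(u)=\frac{u^2}2+\log(2\Phi(u))$; $f_i=f\big(\delta+\frac{(i-1)(1-\delta)}{r}\big)$. For $\mathbf{h}\in[0,1-\delta]^r$: $\psi_{com}(\mathbf{h})=\frac{1-\delta}{r}\sum_{i=1}^rH\big(\frac{h_i}{1-\delta}\big)+\big(r\sum_ih_i-\delta\big)\log2$; $c_1=\int_0^\delta f^2(u)du$, $\bar c_0=\frac1r\sum_if_ih_i$, $\bar\lambda_0(s)=\frac{1}{r\bar c_0}\sum_ih_i\lambda(sf_i)$, $\bar\lambda_0^*(y)=\sup_{s\in\mathbb{R}}(sy-\bar\lambda_0(s))$, with $\bar c_0\bar\lambda_0^*(y)$ understood as $\sup_s(\bar c_0sy-\frac1r\sum_ih_i\lambda(sf_i))$; $\psi_{int}(\mathbf{h},y)=-\big(r\sum_ih_i-\delta\big)\log2-\Big(\frac{\bar c_0^2}{2c_1}y^2+\bar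 c_0\bar\lambda_0^*(y)\Big)$; $\bar c_2=\int_0^\delta f^2(u)du+\frac1r\sum_if_i^2h_i$, $\bar G_0(x)=\int_\delta^1\log\operatorname{erf}(xf(u))du-\frac1r\sum_ih_i\log\operatorname{erf}(xf_i)$, $\psi_{ext}(\mathbf{h},x)=-(\bar c_2x^2-\bar G_0(x))$. *)

From Stdlib Require Import Reals Lra.
From Coquelicot Require Import Coquelicot.
Open Scope R_scope.

Fixpoint sumr (n : nat) (g : nat -> R) : R :=
  match n with O => 0 | S m => sumr m g + g m end.

Definition Hent (t : R) : R := - t * ln t - (1 - t) * ln (1 - t).

Definition erf (x : R) : R := 2 / sqrt PI * RInt (fun t => exp (- t ^ 2)) 0 x.

Definition Phi (u : R) : R :=
  RInt_gen (fun t => exp (- t ^ 2 / 2) / sqrt (2 * PI)) (Rbar_locally m_infty) (at_point u).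

Definition lam (u : R) : R := u ^ 2 / 2 + ln (2 * Phi u).

(* f_i for i = 1..r is stored at index i-1 : fi f delta r j = f(delta + j(1-delta)/r), j = 0..r-1 *)
Definition fi (f : R -> R) (delta : R) (r : nat) (j : nat) : R :=
  f (delta + INR j * (1 - delta) / INR r).

Definition psi_com (delta : R) (r : nat) (h : nat -> R) : R :=
  (1 - delta) / INR r * sumr r (fun j => Hent (h j / (1 - delta)))
  + (INR r * sumr r h - delta) * ln 2.

Definition c1 (f : R -> R) (delta : R) : R := RInt (fun u => (f u) ^ 2) 0 delta.

Definition c0bar (f : R -> R) (delta : R) (r : nat) (h : nat -> R) : R :=
  / INR r * sumr r (fun j => fi f delta r j * h j).

(* c0bar * lambda0bar^*(y) := sup_s ( c0bar s y - (1/r) sum_i h_i lambda(s f_i) ), in Rbar *)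
Definition c0_lam0star (f : R -> R) (delta : R) (r : nat) (h : nat -> R) (y : R) : Rbar :=
  Lub_Rbar (fun z => exists s : R,
     z = c0bar f delta r h * s * y - / INR r * sumr r (fun j => h j * lam (s * fi f delta r j))).

Definition psi_int (f : R -> R) (delta : R) (r : nat) (h : nat -> R) (y : R) : Rbar :=
  Rbar_minus
    (Finite (- (INR r * sumr r h - delta) * ln 2
             - (c0bar f delta r h) ^ 2 / (2 * c1 f delta) * y ^ 2))
    (c0_lam0star f delta r h y).

Definition c2bar (f : R -> R) (delta : R) (r : nat) (h : nat -> R) : R :=
  RInt (fun u => (f u) ^ 2) 0 delta + / INR r * sumr r (fun j => (fi f delta r j) ^ 2 * h j).

Definition G0bar (f : R -> R) (delta : R) (r : nat) (h : nat -> R) (x : R) : R :=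
  RInt (fun u => ln (erf (x * f u))) delta 1
  - / INR r * sumr r (fun j => h j * ln (erf (x * fi f delta r j))).

Definition psi_ext (f : R -> R) (delta : R) (r : nat) (h : nat -> R) (x : R) : R :=
  - (c2bar f delta r h * x ^ 2 - G0bar f delta r h x).

(* h in [0,1-delta]^r  (only coordinates 0..r-1 matter) *)
Definition in_box (r : nat) (delta : R) (h : nat -> R) : Prop :=
  forall j, (j < r)%nat -> 0 <= h j <= 1 - delta.

Definition comb (t : R) (a b : nat -> R) : nat -> R := fun j => t * a j + (1 - t) * b j.

Definition concave_on_box (r : nat) (delta : R) (F : (nat -> R) -> R) : Prop :=
  forall a b t, in_box r delta a -> in_box r delta b -> 0 <= t <= 1 ->
    t * F a + (1 - t) * F b <= F (comb t a b).

(* concavity of an extended-real-valued function on the box: convex hypograph *)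
Definition concave_on_box_Rbar (r : nat) (delta : R) (F : (nat -> R) -> Rbar) : Prop :=
  forall a b t (al be : R), in_box r delta a -> in_box r delta b -> 0 <= t <= 1 ->
    Rbar_le al (F a) -> Rbar_le be (F b) ->
    Rbar_le (t * al + (1 - t) * be) (F (comb t a b)).

Definition continuous_on_01 (f : R -> R) : Prop :=
  forall u, 0 <= u <= 1 -> forall eps, 0 < eps -> exists d, 0 < d /\
    forall v, 0 <= v <= 1 -> Rabs (v - u) < d -> Rabs (f v - f u) < eps.

(* psi_com is a positive multiple of a sum of binary entropies, which are concave
   because t ln t is convex, plus an affine function of h.  psi_ext is affine in h.
   In psi_int, c0bar is affine in h and c1 >= 0, so the quadratic term is convex;
   and c0bar lambda0bar^*(y) is a supremum over s of functions affine in h, hence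
   convex. *)

From Pilot Require Import Defs.
From Stdlib Require Import Reals Lra Psatz.
From Coquelicot Require Import Coquelicot.
Open Scope R_scope.

Lemma sumr_ext n u v : (forall j, (j < n)%nat -> u j = v j) -> sumr n u = sumr n v.
Proof.
  induction n as [|n IH]; intros Huv; simpl; [reflexivity|].
  rewrite IH, Huv; auto.
Qed.

Lemma sumr_le n u v : (forall j, (j < n)%nat -> u j <= v j) -> sumr n u <= sumr n v.
Proof.
  induction n as [|n IH]; intros Huv; simpl; [lra|].
  assert (sumr n u <= sumr n v) by (apply IH; auto).
  specialize (Huv n (Nat.lt_succ_diag_r n)). lra.
Qed.

Lemma sumr_lin n p q u v :
  sumr n (fun j => p * u j + q * v j) = p * sumr n u + q * sumr n v.
Proof. induction n as [|n IH]; simpl; [ring|]. rewrite IH; ring. Qed.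

Lemma sumr_comb n t a b : sumr n (comb t a b) = t * sumr n a + (1 - t) * sumr n b.
Proof. rewrite <- sumr_lin. apply sumr_ext; intros; reflexivity. Qed.

Lemma sumr_mul_comb n t g a b :
  sumr n (fun j => g j * comb t a b j)
  = t * sumr n (fun j => g j * a j) + (1 - t) * sumr n (fun j => g j * b j).
Proof. rewrite <- sumr_lin. apply sumr_ext; intros; unfold comb; ring. Qed.

Lemma sumr_comb_mul n t g a b :
  sumr n (fun j => comb t a b j * g j)
  = t * sumr n (fun j => a j * g j) + (1 - t) * sumr n (fun j => b j * g j).
Proof. rewrite <- sumr_lin. apply sumr_ext; intros; unfold comb; ring. Qed.

(* Tangent line of t ln t at m, from 1 + ln(m/a) <= m/a. *)
Lemma xlnx_ge_tangent a m : 0 <= a -> 0 < m -> a * ln m + a - m <= a * ln a.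
Proof.
  intros Ha Hm. destruct (Req_dec a 0) as [->|Ha0]; [lra|].
  assert (Hlog : 1 + ln (m / a) <= m / a).
  { rewrite <- (exp_ln (m / a)) at 2 by (apply Rdiv_lt_0_compat; lra).
    apply exp_ineq1_le. }
  rewrite ln_div in Hlog by lra.
  assert (a * (1 + (ln m - ln a)) <= a * (m / a)) by (apply Rmult_le_compat_l; lra).
  replace (a * (m / a)) with m in * by (field; lra). nra.
Qed.

Lemma xlnx_convex a b t : 0 <= a -> 0 <= b -> 0 <= t <= 1 ->
  (t * a + (1 - t) * b) * ln (t * a + (1 - t) * b) <= t * (a * ln a) + (1 - t) * (b * ln b).
Proof.
  intros Ha Hb Ht. set (m := t * a + (1 - t) * b).
  assert (0 <= t * a) by nra. assert (0 <= (1 - t) * b) by nra.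
  destruct (Req_dec m 0) as [Hm0|Hm0].
  - assert (Hta : t * a = 0) by (unfold m in Hm0; lra).
    assert (Htb : (1 - t) * b = 0) by (unfold m in Hm0; lra).
    rewrite Hm0, <- !Rmult_assoc, Hta, Htb. lra.
  - assert (Hm : 0 < m) by (unfold m in *; lra).
    pose proof (xlnx_ge_tangent a m Ha Hm). pose proof (xlnx_ge_tangent b m Hb Hm).
    assert (t * (a * ln m + a - m) <= t * (a * ln a)) by (apply Rmult_le_compat_l; lra).
    assert ((1 - t) * (b * ln m + b - m) <= (1 - t) * (b * ln b))
      by (apply Rmult_le_compat_l; lra).
    assert (m * ln m = t * (a * ln m + a - m) + (1 - t) * (b * ln m + b - m))
      by (set (L := ln m); unfold m; ring).
    lra.
Qed.

Lemma Hent_concave p q t : 0 <= p <= 1 -> 0 <= q <= 1 -> 0 <= t <= 1 ->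
  t * Hent p + (1 - t) * Hent q <= Hent (t * p + (1 - t) * q).
Proof.
  intros Hp Hq Ht. unfold Hent.
  pose proof (xlnx_convex p q t ltac:(lra) ltac:(lra) Ht).
  pose proof (xlnx_convex (1 - p) (1 - q) t ltac:(lra) ltac:(lra) Ht).
  replace (1 - (t * p + (1 - t) * q)) with (t * (1 - p) + (1 - t) * (1 - q)) by ring.
  nra.
Qed.

Lemma psi_com_concave delta r : 0 < delta < 1 ->
  concave_on_box r delta (fun h => psi_com delta r h).
Proof.
  intros Hd a b t Ha Hb Ht. unfold psi_com. rewrite sumr_comb.
  assert (Hscaled : forall h j, in_box r delta h -> (j < r)%nat ->
            0 <= h j / (1 - delta) <= 1).
  { intros h j Hh Hj. destruct (Hh j Hj).
    split; [apply Rdiv_le_0_compat; lra|].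
    apply (Rmult_le_reg_r (1 - delta)); [lra|].
    unfold Rdiv. rewrite Rmult_assoc, Rinv_l by lra. lra. }
  assert (Hsum : t * sumr r (fun j => Hent (a j / (1 - delta)))
                 + (1 - t) * sumr r (fun j => Hent (b j / (1 - delta)))
                 <= sumr r (fun j => Hent (comb t a b j / (1 - delta)))).
  { rewrite <- sumr_lin. apply sumr_le. intros j Hj.
    replace (comb t a b j / (1 - delta))
      with (t * (a j / (1 - delta)) + (1 - t) * (b j / (1 - delta)))
      by (unfold comb, Rdiv; ring).
    apply Hent_concave; auto. }
  destruct (Nat.eq_0_gt_0_cases r) as [->|Hr].
  - simpl. rewrite Rdiv_0_r. lra.
  - assert (HK : 0 <= (1 - delta) / INR r)
      by (apply Rdiv_le_0_compat; [lra | apply lt_0_INR; exact Hr]).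
    apply Rmult_le_compat_l with (r := (1 - delta) / INR r) in Hsum; [|exact HK].
    nra.
Qed.

Lemma psi_ext_affine f delta r x a b t :
  psi_ext f delta r (comb t a b) x
  = t * psi_ext f delta r a x + (1 - t) * psi_ext f delta r b x.
Proof.
  unfold psi_ext, c2bar, G0bar.
  rewrite (sumr_mul_comb r t (fun j => fi f delta r j ^ 2)).
  rewrite (sumr_comb_mul r t (fun j => ln (erf (x * fi f delta r j)))).
  ring.
Qed.

Lemma psi_ext_concave f delta r x : concave_on_box r delta (fun h => psi_ext f delta r h x).
Proof. intros a b t _ _ _. rewrite psi_ext_affine. lra. Qed.

Definition clamp01 (u : R) : R := Rmax 0 (Rmin u 1).

Lemma clamp01_in u : 0 <= clamp01 u <= 1.
Proof. unfold clamp01, Rmax, Rmin. repeat destruct Rle_dec; lra. Qed.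

Lemma clamp01_id u : 0 <= u <= 1 -> clamp01 u = u.
Proof. intros Hu. unfold clamp01. rewrite Rmin_left, Rmax_right; lra. Qed.

Lemma clamp01_lipschitz u v : Rabs (clamp01 v - clamp01 u) <= Rabs (v - u).
Proof.
  unfold clamp01, Rmax, Rmin.
  repeat destruct Rle_dec; unfold Rabs; repeat destruct Rcase_abs; lra.
Qed.

(* f is only known to be continuous on [0,1]; clamping makes it continuous on R,
   as required to integrate it with Coquelicot. *)
Lemma continuous_clamp01 g : continuous_on_01 g -> forall u, continuity_pt (fun v => g (clamp01 v)) u.
Proof.
  intros Hg u eps Heps.
  destruct (Hg (clamp01 u) (clamp01_in u) eps Heps) as [d [Hd Hclose]].
  exists d. split; [exact Hd|]. intros v [_ Hv]. simpl in *. unfold R_dist in *.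
  apply Hclose; [apply clamp01_in|].
  eapply Rle_lt_trans; [apply clamp01_lipschitz | exact Hv].
Qed.

Lemma c1_ge0 f delta : continuous_on_01 f -> 0 < delta < 1 -> 0 <= Defs.c1 f delta.
Proof.
  intros Hf Hd. unfold Defs.c1.
  apply RInt_ge_0; [lra| |intros; apply pow2_ge_0].
  apply (ex_RInt_ext (fun u => f (clamp01 u) * f (clamp01 u))).
  - intros u Hu. rewrite Rmin_left, Rmax_right in Hu by lra.
    rewrite clamp01_id by lra. simpl. ring.
  - apply (@ex_RInt_continuous R_CompleteNormedModule). intros z _.
    apply continuity_pt_filterlim, continuity_pt_mult; apply continuous_clamp01, Hf.
Qed.

Lemma sq_convex K u v t : 0 <= K -> 0 <= t <= 1 ->
  (t * u + (1 - t) * v) ^ 2 * K <= t * (u ^ 2 * K) + (1 - t) * (v ^ 2 * K).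
Proof.
  intros HK Ht.
  assert (0 <= t * (1 - t) * (u - v) ^ 2 * K).
  { apply Rmult_le_pos; [|exact HK]. apply Rmult_le_pos; [nra | apply pow2_ge_0]. }
  nra.
Qed.

Lemma c0bar_comb f delta r t a b :
  c0bar f delta r (comb t a b) = t * c0bar f delta r a + (1 - t) * c0bar f delta r b.
Proof. unfold c0bar. rewrite sumr_mul_comb. ring. Qed.

Definition Lub_range (g : R -> R) : Rbar := Lub_Rbar (fun z => exists s, z = g s).

Lemma Lub_range_ub (g : R -> R) (s : R) : Rbar_le (g s) (Lub_range g).
Proof. apply (proj1 (Lub_Rbar_correct _)). exists s. reflexivity. Qed.

Lemma Lub_range_not_m_infty (g : R -> R) : Lub_range g <> m_infty.
Proof. intros E. pose proof (Lub_range_ub g 0) as H. rewrite E in H. exact H. Qed.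

Lemma Lub_range_convex (g ga gb : R -> R) (t la lb : R) : 0 <= t <= 1 ->
  (forall s, g s = t * ga s + (1 - t) * gb s) ->
  Lub_range ga = Finite la -> Lub_range gb = Finite lb ->
  Rbar_le (Lub_range g) (t * la + (1 - t) * lb).
Proof.
  intros Ht Hg Ea Eb. apply (proj2 (Lub_Rbar_correct _)). intros z [s ->].
  pose proof (Lub_range_ub ga s) as Ha. pose proof (Lub_range_ub gb s) as Hb.
  rewrite Ea in Ha. rewrite Eb in Hb. simpl in *. rewrite Hg.
  assert (t * ga s <= t * la) by (apply Rmult_le_compat_l; lra).
  assert ((1 - t) * gb s <= (1 - t) * lb) by (apply Rmult_le_compat_l; lra).
  lra.
Qed.

Definition c0_lam0_dual f delta r h y (s : R) : R :=
  c0bar f delta r h * s * y - / INR r * sumr r (fun j => h j * lam (s * fi f delta r j)).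

Lemma c0_lam0star_Lub_range f delta r h y :
  c0_lam0star f delta r h y = Lub_range (c0_lam0_dual f delta r h y).
Proof. reflexivity. Qed.

Lemma c0_lam0_dual_comb f delta r t a b y s :
  c0_lam0_dual f delta r (comb t a b) y s
  = t * c0_lam0_dual f delta r a y s + (1 - t) * c0_lam0_dual f delta r b y s.
Proof.
  unfold c0_lam0_dual. rewrite c0bar_comb.
  rewrite (sumr_comb_mul r t (fun j => lam (s * fi f delta r j))). ring.
Qed.

Lemma psi_int_finite_concave f delta r y a b t : continuous_on_01 f -> 0 < delta < 1 ->
  0 <= t <= 1 ->
  let A h := - (INR r * sumr r h - delta) * ln 2
             - c0bar f delta r h ^ 2 / (2 * Defs.c1 f delta) * y ^ 2 in
  t * A a + (1 - t) * A b <= A (comb t a b).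
Proof.
  intros Hf Hd Ht A. unfold A. rewrite sumr_comb, c0bar_comb.
  (* If c1 = 0 the quadratic term vanishes, since / 0 = 0. *)
  assert (HK : 0 <= / (2 * Defs.c1 f delta) * y ^ 2).
  { apply Rmult_le_pos; [|apply pow2_ge_0].
    destruct (Rle_lt_or_eq_dec 0 (Defs.c1 f delta) (c1_ge0 f delta Hf Hd)) as [Hpos|<-].
    - apply Rlt_le, Rinv_0_lt_compat. lra.
    - rewrite Rmult_0_r, Rinv_0. lra. }
  pose proof (sq_convex _ (c0bar f delta r a) (c0bar f delta r b) t HK Ht).
  unfold Rdiv. nra.
Qed.

Lemma psi_int_concave f delta r y : continuous_on_01 f -> 0 < delta < 1 ->
  concave_on_box_Rbar r delta (fun h => psi_int f delta r h y).
Proof.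
  intros Hf Hd a b t al be _ _ Ht Hal Hbe. unfold psi_int in *.
  rewrite !c0_lam0star_Lub_range in *.
  pose proof (Lub_range_not_m_infty (c0_lam0_dual f delta r a y)).
  pose proof (Lub_range_not_m_infty (c0_lam0_dual f delta r b y)).
  pose proof (Lub_range_not_m_infty (c0_lam0_dual f delta r (comb t a b) y)).
  destruct (Lub_range (c0_lam0_dual f delta r a y)) as [la| |] eqn:Ea;
    [| contradiction Hal | contradiction].
  destruct (Lub_range (c0_lam0_dual f delta r b y)) as [lb| |] eqn:Eb;
    [| contradiction Hbe | contradiction].
  pose proof (Lub_range_convex _ _ _ t la lb Ht (c0_lam0_dual_comb f delta r t a b y) Ea Eb)
    as Hconv.
  destruct (Lub_range (c0_lam0_dual f delta r (comb t a b) y)) as [lc| |];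
    [| contradiction Hconv | contradiction].
  pose proof (psi_int_finite_concave f delta r y a b t Hf Hd Ht) as HA. simpl in *.
  assert (t * al <= t * (- (INR r * sumr r a - delta) * ln 2
            - c0bar f delta r a ^ 2 / (2 * Defs.c1 f delta) * y ^ 2 + - la))
    by (apply Rmult_le_compat_l; lra).
  assert ((1 - t) * be <= (1 - t) * (- (INR r * sumr r b - delta) * ln 2
            - c0bar f delta r b ^ 2 / (2 * Defs.c1 f delta) * y ^ 2 + - lb))
    by (apply Rmult_le_compat_l; lra).
  nra.
Qed.

Theorem lemma4 (f : R -> R) (delta : R) (r : nat) (x y : R) :
  continuous_on_01 f ->
  (forall u, 0 <= u <= 1 -> 0 <= f u) ->
  (forall u v, 0 <= u -> u <= v -> v <= 1 -> f u <= f v) ->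
  (forall u, 0 < u <= 1 -> 0 < f u) ->
  0 < delta < 1 ->
  (0 < r)%nat ->
  0 < x ->
  concave_on_box r delta (fun h => psi_com delta r h) /\
  concave_on_box_Rbar r delta (fun h => psi_int f delta r h y) /\
  concave_on_box r delta (fun h => psi_ext f delta r h x).
Proof.
  intros Hf _ _ _ Hd _ _.
  split; [|split].
  - apply psi_com_concave; exact Hd.
  - apply psi_int_concave; assumption.
  - apply psi_ext_concave.
Qed.
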